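(* Let $p\in(1,\infty)$ and let $Y$ be a Banach space whose norm satisfies Rolewicz property $(\beta)$ with power type $p$. Then there exists $\gamma=\gamma(Y)>0$ such that for every non-contractive Lipschitz map $f\colon K_{\omega,1}\to Y$ there exists $i_0\in\mathbb N$ such that $$\|f(r)-f(t_{i_0})\|\le 2\left(\mathrm{Lip}(f)-\frac{\gamma}{\mathrm{Lip}(f)^{p-1}}\right).$$
   Context: For a Banach space $X$ with closed unit ball $B_X$ and a sequence $(y_n)_{n\ge1}$ in $X$, let $\mathrm{sep}[(y_n)]:=\inf\{\|y_m-y_n\|: m\neq n\}$. The $(\beta)$-modulus of the norm is $$\overline{\beta}_X(t):=1-\sup\Big\{\inf_{n\ge1}\tfrac{\|x+y_n\|}{2}\ :\ x\in B_X,\ (y_n)_{n\ge1}\subset B_X,\ \mathrm{sep}[(y_n)]\ge t\Big\}.$$ The norm satisfies Rolewicz property $(\beta)$ with power type $p$ (equivalently, has $(\beta)$-modulus of power type $p$) if there is a constant $c>0$ with $\overline{\beta}_X(t)\ge ct^p$ for all $t\in(0,2]$. $K_{\omega,1}$ is the star graph with a center $b$ and countably infinitely many leaves, each joined to $b$ by an edge; one leaf is denoted $r$ and the remaining leaves are labeled $(t_i)_{i\ge1}$. It carries the unweighted shortest-path metric $\rho$ (so $\rho(r,t_i)=2$, $\rho(t_i,t_j)=2$ for $i\ne j$, $\rho(b,\cdot)=1$ on leaves). A map $f$ between metric spaces is non-contractive if $d(f(x),f(y))\ge \rho(x,y)$ for all $x,y$; $\mathrm{Lip}(f)$ denotes its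 Lipschitz constant. *)

From Stdlib Require Import Reals Lra.
Open Scope R_scope.

Record Banach := {
  bX :> Type;
  badd : bX -> bX -> bX;
  bopp : bX -> bX;
  bzero : bX;
  bscal : R -> bX -> bX;
  bnorm : bX -> R;
  badd_assoc : forall x y z, badd x (badd y z) = badd (badd x y) z;
  badd_comm : forall x y, badd x y = badd y x;
  badd_zero : forall x, badd x bzero = x;
  badd_opp : forall x, badd x (bopp x) = bzero;
  bscal_one : forall x, bscal 1 x = x;
  bscal_assoc : forall a b x, bscal a (bscal b x) = bscal (a * b) x;
  bscal_distr_r : forall a x y, bscal a (badd x y) = badd (bscal a x) (bscal a y);
  bscal_distr_l : forall a b x, bscal (a + b) x = badd (bscal a x) (bscal b x);
  bnorm_nonneg : forall x, 0 <= bnorm x;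
  bnorm_eq0 : forall x, bnorm x = 0 -> x = bzero;
  bnorm_scal : forall a x, bnorm (bscal a x) = Rabs a * bnorm x;
  bnorm_triangle : forall x y, bnorm (badd x y) <= bnorm x + bnorm y;
  bcomplete : forall u : nat -> bX,
    (forall eps, 0 < eps -> exists N, forall m n, (N <= m)%nat -> (N <= n)%nat ->
        bnorm (badd (u m) (bopp (u n))) < eps) ->
    exists l, forall eps, 0 < eps -> exists N, forall n, (N <= n)%nat ->
        bnorm (badd (u n) (bopp l)) < eps
}.

Arguments badd {b0}. Arguments bopp {b0}. Arguments bnorm {b0}.

Definition bsub {X : Banach} (x y : X) : X := badd x (bopp y).

Definition inf_le (a : nat -> R) (M : R) : Prop :=
  forall eps, 0 < eps -> exists n, a n < M + eps.

Definition sep_ge {X : Banach} (y : nat -> X) (t : R) : Prop :=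
  forall m n : nat, m <> n -> t <= bnorm (bsub (y m) (y n)).

(* beta_X(t) >= b, i.e. sup{ inf_n ||x+y_n||/2 : x, y_n in B_X, sep >= t } <= 1 - b *)
Definition beta_modulus_ge (X : Banach) (t b : R) : Prop :=
  forall (x : X) (y : nat -> X),
    bnorm x <= 1 -> (forall n, bnorm (y n) <= 1) -> sep_ge y t ->
    inf_le (fun n => bnorm (badd x (y n)) / 2) (1 - b).

Definition beta_power_type (X : Banach) (p : R) : Prop :=
  exists c, 0 < c /\ forall t, 0 < t <= 2 -> beta_modulus_ge X t (c * Rpower t p).

(* The star graph K_{omega,1}: center b, distinguished leaf r, leaves t_i *)
Inductive Kw1 : Type := Kb | Kr | Kt (i : nat).

Definition rho (u v : Kw1) : R :=
  match u, v with
  | Kb, Kb => 0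
  | Kr, Kr => 0
  | Kt i, Kt j => if Nat.eqb i j then 0 else 2
  | Kb, _ => 1
  | _, Kb => 1
  | _, _ => 2
  end.

Definition noncontractive {X : Banach} (f : Kw1 -> X) : Prop :=
  forall u v, rho u v <= bnorm (bsub (f u) (f v)).

Definition lipschitz {X : Banach} (f : Kw1 -> X) : Prop :=
  exists L, forall u v, bnorm (bsub (f u) (f v)) <= L * rho u v.

Definition Lip_is {X : Banach} (f : Kw1 -> X) (L : R) : Prop :=
  is_lub (fun s => exists u v, u <> v /\ s = bnorm (bsub (f u) (f v)) / rho u v) L.

(* Rescale the two edges of the star by 1/L: x := (f r - f b)/L and
   y_n := (f b - f t_n)/L lie in the unit ball, non-contractivity makes (y_n)
   2/L-separated, and x + y_n = (f r - f t_n)/L. Property (beta) then gives n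
   with ||f r - f t_n|| <= 2L (1 - c (2/L)^p) + eps = 2L - 2 c 2^p / L^(p-1) + eps;
   taking eps := c 2^p / L^(p-1) shows that gamma := c 2^p / 2 works. *)

From Stdlib Require Import Reals Lra Lia.
Open Scope R_scope.

Section VectorAlgebra.
Variable X : Banach.
Implicit Types x y u v w : X.

Lemma badd_zero_l x : badd (bzero X) x = x.
Proof. rewrite badd_comm. apply badd_zero. Qed.

Lemma badd_opp_l x : badd (bopp x) x = bzero X.
Proof. rewrite badd_comm. apply badd_opp. Qed.

Lemma bopp_unique x y : badd x y = bzero X -> y = bopp x.
Proof.
  intro H. rewrite <- (badd_zero X y), <- (badd_opp X x), badd_assoc,
    (badd_comm X y x), H. apply badd_zero_l.
Qed.

Lemma bopp_opp x : bopp (bopp x) = x.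
Proof. symmetry. apply bopp_unique, badd_opp_l. Qed.

Lemma bopp_add u v : bopp (badd u v) = badd (bopp u) (bopp v).
Proof.
  symmetry. apply bopp_unique.
  rewrite (badd_comm X (bopp u) (bopp v)), badd_assoc,
    <- (badd_assoc X u v (bopp v)), badd_opp, badd_zero, badd_opp.
  reflexivity.
Qed.

Lemma bscal_zero a : bscal X a (bzero X) = bzero X.
Proof.
  assert (Hdup : bscal X a (bzero X) = badd (bscal X a (bzero X)) (bscal X a (bzero X))).
  { rewrite <- bscal_distr_r, badd_zero. reflexivity. }
  assert (H := f_equal (fun z => badd z (bopp (bscal X a (bzero X)))) Hdup).
  simpl in H. rewrite badd_opp, <- badd_assoc, badd_opp, badd_zero in H.
  symmetry. exact H.
Qed.

Lemma bopp_scal a v : bopp (bscal X a v) = bscal X a (bopp v).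
Proof.
  symmetry. apply bopp_unique. rewrite <- bscal_distr_r, badd_opp. apply bscal_zero.
Qed.

Lemma bsub_scal a u v : bsub (bscal X a u) (bscal X a v) = bscal X a (bsub u v).
Proof. unfold bsub. rewrite bopp_scal, bscal_distr_r. reflexivity. Qed.

Lemma badd_bsub u v w : badd (bsub u v) (bsub v w) = bsub u w.
Proof.
  unfold bsub. rewrite <- badd_assoc, (badd_assoc X (bopp v) v (bopp w)),
    badd_opp_l, badd_zero_l.
  reflexivity.
Qed.

Lemma bsub_bsub_l u v w : bsub (bsub u v) (bsub u w) = bsub w v.
Proof.
  unfold bsub. rewrite bopp_add, bopp_opp, <- badd_assoc,
    (badd_comm X (bopp v) (badd (bopp u) w)), <- badd_assoc,
    (badd_assoc X u (bopp u) _), badd_opp, badd_zero_l.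
  reflexivity.
Qed.

Lemma bnorm_scal_pos a v : 0 < a -> bnorm (bscal X a v) = a * bnorm v.
Proof. intro ha. rewrite bnorm_scal, Rabs_right by lra. reflexivity. Qed.

End VectorAlgebra.

Lemma beta_modulus_two_step (X : Banach) (t b L : R) (w u : X) (z : nat -> X) :
  beta_modulus_ge X t b -> 0 < L ->
  bnorm (bsub w u) <= L -> (forall n, bnorm (bsub u (z n)) <= L) ->
  (forall m n, m <> n -> L * t <= bnorm (bsub (z m) (z n))) ->
  forall eps, 0 < eps -> exists n, bnorm (bsub w (z n)) < 2 * L * (1 - b) + eps.
Proof.
  intros hbeta hL hwu huz hsep eps heps.
  assert (hinvL : 0 < / L) by (apply Rinv_0_lt_compat; lra).
  assert (hunit : forall v : X, bnorm v <= L -> bnorm (bscal X (/ L) v) <= 1).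
  { intros v hv. rewrite bnorm_scal_pos by lra.
    apply (Rmult_le_reg_l L); [lra|]. rewrite <- Rmult_assoc, Rinv_r by lra. lra. }
  assert (hsep' : sep_ge (fun n => bscal X (/ L) (bsub u (z n))) t).
  { intros m n hmn. rewrite bsub_scal, bsub_bsub_l, bnorm_scal_pos by lra.
    apply (Rmult_le_reg_l L); [lra|]. rewrite <- Rmult_assoc, Rinv_r by lra.
    rewrite Rmult_1_l. apply hsep. lia. }
  destruct (hbeta _ _ (hunit _ hwu) (fun n => hunit _ (huz n)) hsep' (eps / (2 * L)))
    as [n hn].
  { apply Rdiv_lt_0_compat; lra. }
  exists n. simpl in hn.
  rewrite <- bscal_distr_r, badd_bsub, bnorm_scal_pos in hn by lra.
  apply (Rmult_lt_compat_l (2 * L)) in hn; [|lra].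
  replace (2 * L * (/ L * bnorm (bsub w (z n)) / 2)) with (bnorm (bsub w (z n))) in hn
    by (field; lra).
  replace (2 * L * (1 - b + eps / (2 * L))) with (2 * L * (1 - b) + eps) in hn
    by (field; lra).
  exact hn.
Qed.

Lemma rho_pos (u v : Kw1) : u <> v -> 0 < rho u v.
Proof.
  intro huv. destruct u as [| |i], v as [| |j]; simpl; try lra; try congruence.
  destruct (Nat.eqb_spec i j); [congruence | lra].
Qed.

Lemma rho_Kt_neq (i j : nat) : i <> j -> rho (Kt i) (Kt j) = 2.
Proof. intro hij. simpl. destruct (Nat.eqb_spec i j); [contradiction | reflexivity]. Qed.

Lemma Lip_is_le {X : Banach} (f : Kw1 -> X) (L : R) (u v : Kw1) :
  Lip_is f L -> u <> v -> bnorm (bsub (f u) (f v)) <= L * rho u v.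
Proof.
  intros [hub _] huv. assert (hr := rho_pos u v huv).
  assert (H := hub _ (ex_intro _ u (ex_intro _ v (conj huv eq_refl)))).
  apply (Rmult_le_compat_r (rho u v)) in H; [|lra].
  unfold Rdiv in H. rewrite Rmult_assoc, Rinv_l in H by lra. lra.
Qed.

Lemma Lip_is_ge_1 {X : Banach} (f : Kw1 -> X) (L : R) :
  noncontractive f -> Lip_is f L -> 1 <= L.
Proof.
  intros hnc hL. assert (H1 := hnc Kb Kr). assert (H2 := Lip_is_le f L Kb Kr hL ltac:(discriminate)).
  simpl in *. lra.
Qed.

Lemma Rpower_div_l (x y p : R) : 0 < x -> 0 < y ->
  Rpower (x / y) p = Rpower x p / Rpower y p.
Proof.
  intros hx hy. assert (hyp : 0 < Rpower y p) by (unfold Rpower; apply exp_pos).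
  apply (Rmult_eq_reg_r (Rpower y p)); [|lra].
  rewrite Rpower_mult_distr by (try apply Rdiv_lt_0_compat; lra).
  replace (x / y * y) with x by (field; lra). field. lra.
Qed.

Lemma Rpower_minus_1 (x p : R) : 0 < x -> Rpower x (p - 1) = Rpower x p / x.
Proof.
  intro hx. unfold Rminus. rewrite Rpower_plus, Rpower_Ropp, Rpower_1 by lra.
  reflexivity.
Qed.

Theorem lemma1 (p : R) (hp : 1 < p) (Y : Banach) (hY : beta_power_type Y p) :
  exists gamma, 0 < gamma /\
    forall f : Kw1 -> Y, lipschitz f -> noncontractive f ->
    forall L, Lip_is f L ->
    exists i0 : nat,
      bnorm (bsub (f Kr) (f (Kt i0))) <= 2 * (L - gamma / Rpower L (p - 1)).
Proof.
  destruct hY as [c [hc hbeta]].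
  assert (h2p : 0 < Rpower 2 p) by (unfold Rpower; apply exp_pos).
  exists (c * Rpower 2 p / 2). split; [nra|].
  intros f _ hnc L hLip.
  assert (hL := Lip_is_ge_1 f L hnc hLip).
  assert (hLp : 0 < Rpower L p) by (unfold Rpower; apply exp_pos).
  assert (ht : 0 < 2 / L <= 2).
  { split; [apply Rdiv_lt_0_compat; lra|].
    apply (Rmult_le_reg_l L); [lra|]. field_simplify; lra. }
  assert (hsep : forall m n, m <> n ->
            L * (2 / L) <= bnorm (bsub (f (Kt m)) (f (Kt n)))).
  { intros m n hmn. assert (H := hnc (Kt m) (Kt n)).
    rewrite rho_Kt_neq in H by exact hmn.
    replace (L * (2 / L)) with 2 by (field; lra). exact H. }
  assert (hrb : bnorm (bsub (f Kr) (f Kb)) <= L).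
  { pose proof (Lip_is_le f L Kr Kb hLip ltac:(discriminate)). simpl in *. lra. }
  assert (hbt : forall n, bnorm (bsub (f Kb) (f (Kt n))) <= L).
  { intro n. pose proof (Lip_is_le f L Kb (Kt n) hLip ltac:(discriminate)).
    simpl in *. lra. }
  assert (heps : 0 < c * Rpower 2 p / Rpower L (p - 1)).
  { rewrite Rpower_minus_1 by lra.
    apply Rdiv_lt_0_compat; [nra | apply Rdiv_lt_0_compat; lra]. }
  destruct (beta_modulus_two_step Y _ _ L (f Kr) (f Kb) (fun n => f (Kt n))
              (hbeta _ ht) ltac:(lra) hrb hbt hsep _ heps) as [n hn].
  exists n. apply Rlt_le. eapply Rlt_le_trans; [exact hn|].
  rewrite Rpower_div_l, Rpower_minus_1 by lra.
  apply Req_le. field. lra.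
Qed.
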